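(* If $p:X\to Y$ is a covering map with finite fibers and $X$ is paracompact (Hausdorff), then $p$ is an overlay.
   Context: A covering map $p:X\to Y$ is a continuous surjection such that every point of $Y$ has an open neighborhood $V$ with $p^{-1}(V)$ a disjoint union of open sets each mapped homeomorphically onto $V$. For a continuous map $p:X\to Y$: a slice of $p$ is an open set $U\subseteq X$ such that $p^{-1}(p(U))$ is the disjoint union of a family of open sets $U_s$ ($s\in S$), each mapped by $p$ homeomorphically onto $p(U)$, with $U=U_t$ for some $t\in S$. A covering structure of $p$ is an open cover $\mathcal S$ of $X$ by slices of $p$ such that for every $U\in\mathcal S$, $p^{-1}(p(U))$ is the disjoint union of a family $\{U_j\}_{j\in J}$ of elements of $\mathcal S$, each mapped homeomorphically onto $p(U)$. For a cover $\mathcal S$ and $x\in X$, $st(x,\mathcal S)=\bigcup\{U\in\mathcal S: x\in U\}$. An overlay structure of $p$ is a covering structure $\mathcal S$ such that $st(x,\mathcal S)$ is a slice of $p$ for every $x\in X$. The map $p$ is an overlay if it has an overlay structure. *)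

From Stdlib Require Import List.

Record TopSpace := {
  carrier :> Type;
  is_open : (carrier -> Prop) -> Prop;
  open_full : is_open (fun _ => True);
  open_inter : forall U V, is_open U -> is_open V -> is_open (fun x => U x /\ V x);
  open_union : forall F : (carrier -> Prop) -> Prop,
      (forall U, F U -> is_open U) -> is_open (fun x => exists U, F U /\ U x)
}.

Arguments is_open {t} _.

Section Topo.
Context {X Y : TopSpace}.

Definition set_eq (A B : X -> Prop) : Prop := forall x, A x <-> B x.

Definition open_in {Z : TopSpace} (A S : Z -> Prop) : Prop :=
  exists O : Z -> Prop, is_open O /\ forall z, S z <-> (A z /\ O z).

Definition image (p : X -> Y) (A : X -> Prop) : Y -> Prop :=
  fun y => exists x, A x /\ p x = y.

Definition continuous (p : X -> Y) : Prop :=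
  forall V : Y -> Prop, is_open V -> is_open (fun x => V (p x)).

Definition homeo_onto (p : X -> Y) (U : X -> Prop) (V : Y -> Prop) : Prop :=
  (forall x, U x -> V (p x)) /\
  (forall x x', U x -> U x' -> p x = p x' -> x = x') /\
  (forall y, V y -> exists x, U x /\ p x = y) /\
  (forall W : Y -> Prop, open_in V W -> open_in U (fun x => U x /\ W (p x))) /\
  (forall W : X -> Prop, open_in U W -> open_in V (image p W)).

Definition disjoint_sheets (p : X -> Y) (A : X -> Prop) (V : Y -> Prop)
    (S : Type) (Us : S -> X -> Prop) : Prop :=
  (forall s, is_open (Us s)) /\
  (forall s t x, Us s x -> Us t x -> s = t) /\
  (forall x, A x <-> exists s, Us s x) /\
  (forall s, homeo_onto p (Us s) V).

Definition covering_map (p : X -> Y) : Prop :=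
  continuous p /\
  (forall y : Y, exists x, p x = y) /\
  (forall y : Y, exists V : Y -> Prop, is_open V /\ V y /\
     exists (S : Type) (Us : S -> X -> Prop),
       disjoint_sheets p (fun x => V (p x)) V S Us).

Definition slice (p : X -> Y) (U : X -> Prop) : Prop :=
  is_open U /\
  exists (S : Type) (Us : S -> X -> Prop) (t : S),
    disjoint_sheets p (fun x => image p U (p x)) (image p U) S Us /\
    set_eq U (Us t).

Definition covering_structure (p : X -> Y) (C : (X -> Prop) -> Prop) : Prop :=
  (forall U, C U -> slice p U) /\
  (forall x : X, exists U, C U /\ U x) /\
  (forall U, C U ->
     exists (J : Type) (Us : J -> X -> Prop),
       (forall j, C (Us j)) /\
       disjoint_sheets p (fun x => image p U (p x)) (image p U) J Us).

Definition star (C : (X -> Prop) -> Prop) (x : X) : X -> Prop :=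
  fun z => exists U, C U /\ U x /\ U z.

Definition overlay_structure (p : X -> Y) (C : (X -> Prop) -> Prop) : Prop :=
  covering_structure p C /\ forall x : X, slice p (star C x).

Definition overlay (p : X -> Y) : Prop :=
  exists C, overlay_structure p C.

Definition finite_fibers (p : X -> Y) : Prop :=
  forall y : Y, exists l : list X, forall x, p x = y -> In x l.

End Topo.

Definition hausdorff (X : TopSpace) : Prop :=
  forall x y : X, x <> y ->
    exists U V : X -> Prop, is_open U /\ is_open V /\ U x /\ V y /\
      forall z, ~ (U z /\ V z).

Definition paracompact (X : TopSpace) : Prop :=
  forall (I : Type) (Us : I -> X -> Prop),
    (forall i, is_open (Us i)) -> (forall x, exists i, Us i x) ->
    exists (J : Type) (Vs : J -> X -> Prop),
      (forall j, is_open (Vs j)) /\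
      (forall x, exists j, Vs j x) /\
      (forall j, exists i, forall x, Vs j x -> Us i x) /\
      (forall x : X, exists W : X -> Prop, is_open W /\ W x /\
         exists l : list J, forall j, (exists z, W z /\ Vs j z) -> In j l).

From Stdlib Require Import List Classical FunctionalExtensionality
  PropExtensionality IndefiniteDescription ProofIrrelevance.

(* Fix for every y a sheet decomposition over an evenly covered open V y
   (a "sheet system").  Paracompact Hausdorff spaces are regular, hence
   every open cover has a locally finite open refinement B whose closures
   lie in members of the cover; choose one with cl(B k) inside p^-1(V(c k)).
   Local finiteness gives every x an "adapted" neighbourhood G x: it lies in
   the sheet of x, meets B k only when x is in cl(B k), and then lies in the
   sheet of x over V (c k).  Since fibres are finite, the intersection W y of
   the p(G x) over the fibre of y is an open neighbourhood of y, and the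
   "pieces" (parts over W y of the sheets over V y) form a covering
   structure.  An adapted-neighbourhood argument shows that each piece
   meeting cl(B k) lies in one sheet over V (c k); consequently the star of
   x (the union of the pieces through x) lies in one such sheet, so p is
   injective on it and the stars of the points of a fibre are disjoint:
   stars are slices, and the pieces form an overlay structure. *)

Set Implicit Arguments.
Unset Strict Implicit.

Lemma set_ext (T : Type) (A B : T -> Prop) : (forall x, A x <-> B x) -> A = B.
Proof.
  intro H; apply functional_extensionality; intro x.
  apply propositional_extensionality; apply H.
Qed.

Section GeneralTopology.
Context {X : TopSpace}.

Lemma open_ext (A B : X -> Prop) : is_open A -> (forall x, A x <-> B x) -> is_open B.
Proof. intros HA H; rewrite <- (set_ext H); exact HA. Qed.

Lemma open_local (A : X -> Prop) :
  (forall x, A x -> exists O, is_open O /\ O x /\ forall z, O z -> A z) -> is_open A.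
Proof.
  intro H.
  apply open_ext with (fun x => exists O, (is_open O /\ forall z, O z -> A z) /\ O x).
  - apply open_union; intros O [HO _]; exact HO.
  - intro x; split.
    + intros [O [[_ HOA] Ox]]; auto.
    + intro Ax; destruct (H x Ax) as [O [HO [Ox HOA]]]; exists O; auto.
Qed.

Lemma nbhd_forall_list (A : Type) (x : X) (l : list A) (P : A -> (X -> Prop) -> Prop) :
  (forall a (O O' : X -> Prop), (forall z, O' z -> O z) -> P a O -> P a O') ->
  (forall a, In a l -> exists O, is_open O /\ O x /\ P a O) ->
  exists O, is_open O /\ O x /\ forall a, In a l -> P a O.
Proof.
  intros Hmono; induction l as [|a l IH]; intro H.
  - exists (fun _ => True); split; [apply open_full | split; [auto | intros a []]].
  - destruct (H a (or_introl eq_refl)) as [O1 [HO1 [O1x P1]]].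
    destruct IH as [O2 [HO2 [O2x P2]]]; [intros; apply H; simpl; auto |].
    exists (fun z => O1 z /\ O2 z); split; [apply open_inter; auto | split; [auto |]].
    intros b [<- | Hb].
    + apply (Hmono a O1); [intros z []; auto | auto].
    + apply (Hmono b O2); [intros z []; auto | auto].
Qed.

Definition closure (A : X -> Prop) (x : X) : Prop :=
  forall O, is_open O -> O x -> exists w, O w /\ A w.

Lemma closure_incl (A : X -> Prop) (x : X) : A x -> closure A x.
Proof. intros Ax O _ Ox; exists x; auto. Qed.

Lemma not_closure_nbhd (A : X -> Prop) (x : X) :
  ~ closure A x -> exists O, is_open O /\ O x /\ forall w, O w -> ~ A w.
Proof.
  intro Hx; apply NNPP; intro Hno; apply Hx; intros O HO Ox.
  apply NNPP; intro Hempty; apply Hno.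
  exists O; split; [auto | split; [auto |]]; intros w Ow Aw; apply Hempty; eauto.
Qed.

Definition locally_finite (K : Type) (B : K -> X -> Prop) : Prop :=
  forall x : X, exists W : X -> Prop, is_open W /\ W x /\
    exists l : list K, forall k, (exists z, W z /\ B k z) -> In k l.

Lemma lf_closure_inside (A : X -> Prop) (x : X) (J : Type) (Vs : J -> X -> Prop) :
  (forall j, is_open (Vs j)) -> (forall z, exists j, Vs j z) -> locally_finite Vs ->
  (forall j, (forall z, Vs j z -> A z) \/
             exists O, is_open O /\ O x /\ forall z, O z -> ~ Vs j z) ->
  exists G, is_open G /\ G x /\ forall z, closure G z -> A z.
Proof.
  intros HVo HVcov HVlf Hdich.
  destruct (HVlf x) as [W [HW [Wx [l Hl]]]].
  destruct (nbhd_forall_list (x := x) (l := l) (P := fun j O => (forall z, Vs j z -> A z) \/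
                          forall z, O z -> ~ Vs j z))
    as [O [HO [Ox HOl]]].
  - intros j O O' Hsub [H | H]; [left | right; intros z Oz]; auto.
  - intros j _; destruct (Hdich j) as [H | [O [HO [Ox H]]]].
    + exists (fun _ => True); split; [apply open_full | auto].
    + exists O; auto.
  - exists (fun z => W z /\ O z); split; [apply open_inter; auto | split; [auto |]].
    intros z Hz; apply NNPP; intro nAz.
    destruct (HVcov z) as [j Vjz].
    destruct (Hz (Vs j) (HVo j) Vjz) as [v [Vjv [Wv Ov]]].
    destruct (HOl j (Hl j (ex_intro _ v (conj Wv Vjv)))) as [H | H].
    + exact (nAz (H z Vjz)).
    + exact (H v Ov Vjv).
Qed.

Lemma paracompact_regular : paracompact X -> hausdorff X ->
  forall (x : X) (A : X -> Prop), is_open A -> A x ->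
  exists G, is_open G /\ G x /\ forall z, closure G z -> A z.
Proof.
  intros Hpc Hh x A HA Ax.
  assert (Hsep : forall z, exists U : X -> Prop, is_open U /\ U z /\
            ((forall w, U w -> A w) \/
             exists O, is_open O /\ O x /\ forall w, O w -> ~ U w)).
  { intro z; destruct (classic (A z)) as [Az | nAz].
    - exists A; auto.
    - assert (Hzx : z <> x) by (intros ->; contradiction).
      destruct (Hh z x Hzx) as [U [O [HU [HO [Uz [Ox Hdisj]]]]]].
      exists U; split; [auto | split; [auto | right]].
      exists O; split; [auto | split; [auto |]]; intros w Ow Uw; apply (Hdisj w); auto. }
  destruct (functional_choice _ Hsep) as [U HU].
  destruct (Hpc X U) as [J [Vs [HVo [HVcov [HVref HVlf]]]]];
    [intro z; apply HU | intro z; exists z; apply HU |].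
  apply (lf_closure_inside HVo HVcov HVlf).
  intro j; destruct (HVref j) as [i Hi].
  destruct (HU i) as [_ [_ [HiA | [O [HO [Ox HOi]]]]]].
  - left; auto.
  - right; exists O; split; [auto | split; [auto |]]; intros w Ow Vw; apply (HOi w Ow); auto.
Qed.

Lemma locally_finite_shrinking (O : X -> X -> Prop) :
  paracompact X -> hausdorff X -> (forall x, is_open (O x) /\ O x x) ->
  exists (K : Type) (B : K -> X -> Prop) (c : K -> X),
    (forall k, is_open (B k)) /\ (forall x, exists k, B k x) /\
    (forall k z, closure (B k) z -> O (c k) z) /\ locally_finite B.
Proof.
  intros Hpc Hh HO.
  assert (Hreg : forall x, exists G, is_open G /\ G x /\ forall z, closure G z -> O x z)
    by (intro x; apply (paracompact_regular Hpc Hh); apply HO).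
  destruct (functional_choice _ Hreg) as [G HG].
  destruct (Hpc X G) as [K [B [HBo [HBcov [HBref HBlf]]]]];
    [intro x; apply HG | intro x; exists x; apply HG |].
  destruct (functional_choice _ HBref) as [c Hc].
  exists K, B, c; split; [auto | split; [auto | split; [| exact HBlf]]].
  intros k z Hz; apply (HG (c k)); intros W HW Wz.
  destruct (Hz W HW Wz) as [w [Ww Bw]]; exists w; split; [auto | apply Hc; auto].
Qed.

End GeneralTopology.

Section SheetSystems.
Context {X Y : TopSpace} (p : X -> Y).

Lemma homeo_onto_of_open_map (U : X -> Prop) (V : Y -> Prop) :
  continuous p -> (forall W, is_open W -> is_open (image p W)) -> is_open U ->
  (forall x, U x -> V (p x)) -> (forall x x', U x -> U x' -> p x = p x' -> x = x') ->
  (forall y, V y -> exists x, U x /\ p x = y) -> homeo_onto p U V.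
Proof.
  intros Hc Hpo HU Hmaps Hinj Honto.
  split; [auto | split; [auto | split; [auto | split]]].
  - intros W [O [HO HW]]; exists (fun x => O (p x)); split; [apply Hc; auto |].
    intro x; split; intros [Ux H]; split; auto; apply HW; auto.
  - intros W [O [HO HW]].
    assert (HWo : is_open W).
    { apply open_ext with (fun x => U x /\ O x); [apply open_inter; auto |].
      intro x; split; intro; apply HW; auto. }
    exists (image p W); split; [apply Hpo; auto |].
    intro y; split; [| tauto]; intros [x [Wx <-]].
    split; [apply Hmaps, HW; auto | exists x; auto].
Qed.

Lemma covering_map_open : covering_map p -> forall W, is_open W -> is_open (image p W).
Proof.
  intros [_ [_ Hloc]] W HW; apply open_local; intros y [w [Ww <-]].
  destruct (Hloc (p w)) as [V [HV [Vw [S [Us [_ [_ [Hcov Hhom]]]]]]]].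
  destruct (proj1 (Hcov w) Vw) as [s Hs].
  destruct (Hhom s) as [_ [_ [_ [_ Himg]]]].
  destruct (Himg (fun x => W x /\ Us s x)) as [O [HO HOeq]];
    [exists W; split; [auto | intro; tauto] |].
  exists (fun y => V y /\ O y); split; [apply open_inter; auto | split].
  - apply HOeq; exists w; auto.
  - intros y Hy; apply HOeq in Hy; destruct Hy as [x [[Wx _] <-]]; exists x; auto.
Qed.

(* Sheet data over an evenly covered open set V: E x is the sheet through
   a point x of p^-1(V); sheets are open, partition p^-1(V), and p maps each
   of them bijectively onto V. *)
Record sheet_system (V : Y -> Prop) (E : X -> X -> Prop) : Prop := {
  ss_base_open : is_open V;
  ss_sheet_open : forall x, V (p x) -> is_open (E x);
  ss_sheet_refl : forall x, V (p x) -> E x x;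
  ss_sheet_base : forall x z, V (p x) -> E x z -> V (p z);
  ss_sheet_inj : forall x z w, V (p x) -> E x z -> E x w -> p z = p w -> z = w;
  ss_sheet_onto : forall x y, V (p x) -> V y -> exists z, E x z /\ p z = y;
  ss_sheet_trans : forall x z, V (p x) -> E x z -> forall w, E z w <-> E x w
}.

Section SheetSystemFacts.
Variables (V : Y -> Prop) (E : X -> X -> Prop).
Hypothesis S : sheet_system V E.

Lemma sheet_sym x z : V (p x) -> E x z -> E z x.
Proof. intros Hx Hxz; apply (ss_sheet_trans S Hx Hxz), (ss_sheet_refl S Hx). Qed.

Lemma sheet_join x z w : V (p x) -> E x z -> E x w -> E z w.
Proof. intros Hx Hxz Hxw; apply (ss_sheet_trans S Hx Hxz); exact Hxw. Qed.

Lemma sheet_fibre_unique x w z : V (p x) -> E x z -> E w z -> p x = p w -> x = w.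
Proof.
  intros Hx Hxz Hwz Hpxw.
  assert (Hw : V (p w)) by (rewrite <- Hpxw; exact Hx).
  apply (ss_sheet_inj S Hx (ss_sheet_refl S Hx)); [| exact Hpxw].
  apply (ss_sheet_trans S Hx Hxz); exact (sheet_sym Hw Hwz).
Qed.

End SheetSystemFacts.

Lemma sheet_system_of_sheets (V : Y -> Prop) (S : Type) (Us : S -> X -> Prop) :
  is_open V -> disjoint_sheets p (fun x => V (p x)) V S Us ->
  sheet_system V (fun x z => exists s, Us s x /\ Us s z).
Proof.
  intros HV [Hop [Hdisj [Hcov Hhom]]]; split; [exact HV | | | | | |].
  - intros x Vx; destruct (proj1 (Hcov x) Vx) as [s Hs].
    apply open_ext with (Us s); [auto |]; intro z; split; [eauto |].
    intros [t [Ht1 Ht2]]; rewrite (Hdisj s t x Hs Ht1); exact Ht2.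
  - intros x Vx; destruct (proj1 (Hcov x) Vx) as [s Hs]; eauto.
  - intros x z _ [s [_ Hs]]; apply (proj1 (Hhom s)); exact Hs.
  - intros x z w _ [s [Hs1 Hs2]] [t [Ht1 Ht2]] Hp.
    rewrite (Hdisj s t x Hs1 Ht1) in Hs2; apply (proj1 (proj2 (Hhom t))); auto.
  - intros x y Vx Vy; destruct (proj1 (Hcov x) Vx) as [s Hs].
    destruct (proj1 (proj2 (proj2 (Hhom s))) y Vy) as [z [Hz <-]]; eauto.
  - intros x z _ [s [Hs1 Hs2]] w; split; intros [t [Ht1 Ht2]].
    + rewrite <- (Hdisj s t z Hs2 Ht1) in Ht2; eauto.
    + rewrite <- (Hdisj s t x Hs1 Ht1) in Ht2; eauto.
Qed.

Lemma covering_sheet_systems : covering_map p ->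
  exists (V : Y -> Y -> Prop) (E : Y -> X -> X -> Prop),
    forall y, sheet_system (V y) (E y) /\ V y y.
Proof.
  intros [_ [_ Hloc]].
  assert (H : forall y, exists VE : (Y -> Prop) * (X -> X -> Prop),
             sheet_system (fst VE) (snd VE) /\ fst VE y).
  { intro y; destruct (Hloc y) as [V [HV [Vy [S [Us Hsh]]]]].
    exists (V, fun x z => exists s, Us s x /\ Us s z); simpl.
    split; [apply (sheet_system_of_sheets HV Hsh) | exact Vy]. }
  destruct (functional_choice _ H) as [f Hf].
  exists (fun y => fst (f y)), (fun y => snd (f y)); exact Hf.
Qed.

End SheetSystems.

Section OverlayConstruction.
Context {X Y : TopSpace} (p : X -> Y).
Hypothesis p_cont : continuous p.
Hypothesis p_open : forall W, is_open W -> is_open (image p W).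
Hypothesis p_surj : forall y : Y, exists x, p x = y.
Hypothesis p_fin : finite_fibers p.

Variables (V : Y -> Y -> Prop) (E : Y -> X -> X -> Prop).
Hypothesis sheets : forall y, sheet_system p (V y) (E y).
Hypothesis V_center : forall y, V y y.

Variables (K : Type) (B : K -> X -> Prop) (c : K -> Y).
Hypothesis B_closure : forall k z, closure (B k) z -> V (c k) (p z).

Record adapted_nbhd (x : X) (G : X -> Prop) : Prop := {
  an_open : is_open G;
  an_center : G x;
  an_sheet : forall z, G z -> E (p x) x z;
  an_meets : forall k, (exists z, G z /\ B k z) -> closure (B k) x;
  an_in_sheet : forall k, closure (B k) x -> forall z, G z -> E (c k) x z
}.

Lemma nbhd_adapted_to (x : X) (k : K) :
  exists O, is_open O /\ O x /\
    (closure (B k) x -> forall z, O z -> E (c k) x z) /\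
    (~ closure (B k) x -> forall z, O z -> ~ B k z).
Proof.
  destruct (classic (closure (B k) x)) as [Hk | Hk].
  - pose proof (B_closure Hk) as Vx.
    exists (E (c k) x); split; [exact (ss_sheet_open (sheets (c k)) Vx) |].
    split; [exact (ss_sheet_refl (sheets (c k)) Vx) | split; [auto | contradiction]].
  - destruct (not_closure_nbhd Hk) as [O [HO [Ox HOk]]].
    exists O; split; [auto | split; [auto | split; [contradiction | auto]]].
Qed.

(* Local finiteness reduces the requirements to finitely many, so adapted
   neighbourhoods exist. *)
Lemma adapted_nbhd_exists : locally_finite B -> forall x, exists G, adapted_nbhd x G.
Proof.
  intros Hlf x; destruct (Hlf x) as [W [HW [Wx [l Hl]]]].
  destruct (nbhd_forall_list (x := x) (l := l)
              (P := fun k O => (closure (B k) x -> forall z, O z -> E (c k) x z) /\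
                               (~ closure (B k) x -> forall z, O z -> ~ B k z)))
    as [O [HO [Ox HOl]]].
  - intros k O O' Hsub [H1 H2]; split; intros Hk z Hz; [apply H1 | apply H2]; auto.
  - intros k _; apply nbhd_adapted_to.
  - pose proof (V_center (p x)) as Vx.
    assert (Hcl_l : forall k, closure (B k) x -> In k l)
      by (intros k Hk; apply Hl, (Hk W HW Wx)).
    exists (fun z => O z /\ E (p x) x z /\ W z); split.
    + apply (open_inter _ O); [exact HO |].
      apply (open_inter _ (E (p x) x) W); [exact (ss_sheet_open (sheets (p x)) Vx) | exact HW].
    + split; [exact Ox | split; [exact (ss_sheet_refl (sheets (p x)) Vx) | exact Wx]].
    + intros z [_ [Hz _]]; exact Hz.
    + intros k [z [[Oz [_ Wz]] Bz]]; apply NNPP; intro Hk.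
      exact (proj2 (HOl k (Hl k (ex_intro _ z (conj Wz Bz)))) Hk z Oz Bz).
    + intros k Hk z [Oz _]; exact (proj1 (HOl k (Hcl_l k Hk)) Hk z Oz).
Qed.

Variable G : X -> X -> Prop.
Hypothesis G_adapted : forall x, adapted_nbhd x (G x).
Hypothesis B_cover : forall x, exists k, B k x.

(* The points of Y covered by p (G x) for every x of the fibre over y: an
   open neighbourhood of y, since fibres are finite and p is open. *)
Definition base_nbhd (y : Y) : Y -> Prop :=
  fun y' => forall x, p x = y -> image p (G x) y'.

Lemma base_nbhd_center y : base_nbhd y y.
Proof. intros x <-; exists x; split; [exact (an_center (G_adapted x)) | reflexivity]. Qed.

Lemma base_nbhd_sub y y' : base_nbhd y y' -> V y y'.
Proof.
  intro Hy'; destruct (p_surj y) as [x <-].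
  destruct (Hy' x eq_refl) as [g [Gg <-]].
  exact (ss_sheet_base (sheets (p x)) (V_center (p x)) (an_sheet (G_adapted x) Gg)).
Qed.

Lemma base_nbhd_open y : is_open (base_nbhd y).
Proof.
  destruct (p_fin y) as [l Hl]; apply open_local; intros y' Hy'.
  destruct (nbhd_forall_list (x := y') (l := l)
              (P := fun x O => p x = y -> forall w, O w -> image p (G x) w))
    as [O [HO [Oy' HOl]]].
  - intros x O O' Hsub H Hx w Hw; apply H; auto.
  - intros x _; destruct (classic (p x = y)) as [Hx | Hx].
    + exists (image p (G x)); split; [apply p_open, (an_open (G_adapted x)) |].
      split; [exact (Hy' x Hx) | auto].
    + exists (fun _ => True); split; [apply open_full | split; [auto | contradiction]].
  - exists O; split; [auto | split; [auto |]].
    intros w Ow x Hx; exact (HOl x (Hl x Hx) Hx w Ow).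
Qed.

Lemma fibre_point_of y z : base_nbhd y (p z) -> exists x, p x = y /\ E y x z.
Proof.
  intro Hz; pose proof (base_nbhd_sub Hz) as Vz.
  destruct (ss_sheet_onto (sheets y) Vz (V_center y)) as [x [Hzx Hx]].
  exists x; split; [exact Hx | exact (sheet_sym (sheets y) Vz Hzx)].
Qed.

Lemma adapted_of_sheet y x u : base_nbhd y (p u) -> p x = y -> E y x u -> G x u.
Proof.
  intros Hu Hx Hxu; destruct (Hu x Hx) as [g [Gg Hg]].
  pose proof (an_sheet (G_adapted x) Gg) as Hxg; rewrite Hx in Hxg.
  assert (Vx : V y (p x)) by (rewrite Hx; apply V_center).
  rewrite <- (ss_sheet_inj (sheets y) Vx Hxg Hxu Hg); exact Gg.
Qed.

Lemma adapted_closure x z k : G x z -> closure (B k) z -> closure (B k) x.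
Proof.
  intros Hz Hcl; apply (an_meets (G_adapted x)).
  exact (Hcl _ (an_open (G_adapted x)) Hz).
Qed.

Definition piece (y : Y) (xi : X) : X -> Prop :=
  fun z => E y xi z /\ base_nbhd y (p z).

Lemma piece_center y x : base_nbhd y (p x) -> piece y x x.
Proof. intro Hx; split; [exact (ss_sheet_refl (sheets y) (base_nbhd_sub Hx)) | exact Hx]. Qed.

Lemma piece_same_sheet y xi k z u :
  base_nbhd y (p xi) -> piece y xi z -> piece y xi u -> closure (B k) z -> E (c k) z u.
Proof.
  intros Hxi [Hxiz Hz] [Hxiu Hu] Hcl.
  destruct (fibre_point_of Hz) as [x [Hx Hxz]].
  assert (Vx : V y (p x)) by (rewrite Hx; apply V_center).
  assert (Hxu : E y x u).
  { apply (ss_sheet_trans (sheets y) Vx Hxz).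
    exact (sheet_join (sheets y) (base_nbhd_sub Hxi) Hxiz Hxiu). }
  pose proof (adapted_of_sheet Hz Hx Hxz) as Gz.
  pose proof (adapted_of_sheet Hu Hx Hxu) as Gu.
  pose proof (adapted_closure Gz Hcl) as Hclx.
  pose proof (an_in_sheet (G_adapted x) Hclx) as Hin.
  exact (sheet_join (sheets (c k)) (B_closure Hclx) (Hin z Gz) (Hin u Gu)).
Qed.

Lemma piece_open y xi : base_nbhd y (p xi) -> is_open (piece y xi).
Proof.
  intro Hxi; apply (open_inter _ (E y xi) (fun z => base_nbhd y (p z))).
  - exact (ss_sheet_open (sheets y) (base_nbhd_sub Hxi)).
  - apply p_cont, base_nbhd_open.
Qed.

Lemma piece_onto y xi w :
  base_nbhd y (p xi) -> base_nbhd y w -> exists z, piece y xi z /\ p z = w.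
Proof.
  intros Hxi Hw.
  destruct (ss_sheet_onto (sheets y) (base_nbhd_sub Hxi) (base_nbhd_sub Hw)) as [z [Hz <-]].
  exists z; split; [split; auto | reflexivity].
Qed.

Lemma piece_homeo y xi : base_nbhd y (p xi) -> homeo_onto p (piece y xi) (base_nbhd y).
Proof.
  intro Hxi; apply homeo_onto_of_open_map; auto.
  - exact (piece_open Hxi).
  - intros z [_ Hz]; exact Hz.
  - intros z z' [Hz _] [Hz' _]; exact (ss_sheet_inj (sheets y) (base_nbhd_sub Hxi) Hz Hz').
  - intros w Hw; exact (piece_onto Hxi Hw).
Qed.

Lemma piece_image y xi : base_nbhd y (p xi) -> image p (piece y xi) = base_nbhd y.
Proof.
  intro Hxi; apply set_ext; intro w; split.
  - intros [z [[_ Hz] <-]]; exact Hz.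
  - intro Hw; exact (piece_onto Hxi Hw).
Qed.

Lemma piece_sheets y xi : base_nbhd y (p xi) ->
  disjoint_sheets p (fun x => image p (piece y xi) (p x)) (image p (piece y xi))
    {x | p x = y} (fun s => piece y (proj1_sig s)).
Proof.
  intro Hxi; rewrite (piece_image Hxi).
  assert (Hfib : forall x, p x = y -> base_nbhd y (p x))
    by (intros x ->; apply base_nbhd_center).
  split; [| split; [| split]].
  - intros [x Hx]; exact (piece_open (Hfib x Hx)).
  - intros [x1 H1] [x2 H2] z [Hz1 _] [Hz2 _]; simpl in *.
    apply ProofIrrelevanceTheory.subset_eq_compat.
    apply (sheet_fibre_unique (sheets y) (base_nbhd_sub (Hfib x1 H1)) Hz1 Hz2); congruence.
  - intro z; split.
    + intro Hz; destruct (fibre_point_of Hz) as [x [Hx Hxz]].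
      exists (exist _ x Hx); split; auto.
    + intros [s [_ Hz]]; exact Hz.
  - intros [x Hx]; exact (piece_homeo (Hfib x Hx)).
Qed.

Lemma piece_slice y xi : base_nbhd y (p xi) -> slice p (piece y xi).
Proof.
  intro Hxi; split; [exact (piece_open Hxi) |].
  destruct (fibre_point_of Hxi) as [x0 [Hx0 Hx0xi]].
  exists {x | p x = y}, (fun s => piece y (proj1_sig s)), (exist _ x0 Hx0).
  split; [exact (piece_sheets Hxi) |].
  assert (Vx0 : V y (p x0)) by (rewrite Hx0; apply V_center).
  intro z; pose proof (ss_sheet_trans (sheets y) Vx0 Hx0xi z).
  unfold piece; simpl; tauto.
Qed.

Definition piece_family (U : X -> Prop) : Prop :=
  exists y xi, base_nbhd y (p xi) /\ U = piece y xi.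

Lemma piece_covering_structure : covering_structure p piece_family.
Proof.
  split; [| split].
  - intros U [y [xi [Hxi ->]]]; exact (piece_slice Hxi).
  - intro x; exists (piece (p x) x); split.
    + exists (p x), x; split; [apply base_nbhd_center | reflexivity].
    + apply piece_center, base_nbhd_center.
  - intros U [y [xi [Hxi ->]]]; exists {x | p x = y}, (fun s => piece y (proj1_sig s)).
    split; [| exact (piece_sheets Hxi)].
    intros [x Hx]; exists y, x; split; [rewrite Hx; apply base_nbhd_center | reflexivity].
Qed.

Definition star_set (x : X) : X -> Prop :=
  fun z => exists y, base_nbhd y (p x) /\ piece y x z.

Lemma star_pieces x : star piece_family x = star_set x.
Proof.
  apply set_ext; intro z; split.
  - intros [U [[y [xi [Hxi ->]]] [[Hxix Hx] [Hxiz Hz]]]].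
    exists y; split; [exact Hx | split; [| exact Hz]].
    exact (sheet_join (sheets y) (base_nbhd_sub Hxi) Hxix Hxiz).
  - intros [y [Hx Hz]]; exists (piece y x).
    split; [exists y, x; auto | split; [apply piece_center; auto | exact Hz]].
Qed.

Lemma star_open x : is_open (star_set x).
Proof.
  apply open_local; intros z [y [Hx Hz]]; exists (piece y x).
  split; [exact (piece_open Hx) | split; [exact Hz | intros w Hw; exists y; auto]].
Qed.

Lemma star_in_sheet x k z : closure (B k) x -> star_set x z -> E (c k) x z.
Proof. intros Hcl [y [Hx Hz]]; exact (piece_same_sheet Hx (piece_center Hx) Hz Hcl). Qed.

Lemma star_point_in_sheet x k z : closure (B k) z -> star_set x z -> E (c k) z x.
Proof. intros Hcl [y [Hx Hz]]; exact (piece_same_sheet Hx Hz (piece_center Hx) Hcl). Qed.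

Lemma star_image x z :
  image p (star_set x) (p z) <-> exists x', p x' = p x /\ star_set x' z.
Proof.
  split.
  - intros [u [[y [Hx [_ Hu]]] Hpu]]; rewrite Hpu in Hu.
    pose proof (base_nbhd_sub Hu) as Vz.
    destruct (ss_sheet_onto (sheets y) Vz (base_nbhd_sub Hx)) as [x' [Hzx' Hx']].
    exists x'; split; [exact Hx' |].
    exists y; split; [rewrite Hx'; exact Hx |].
    split; [exact (sheet_sym (sheets y) Vz Hzx') | exact Hu].
  - intros [x' [Hx' [y [Hyx' [_ Hz]]]]]; rewrite Hx' in Hyx'.
    destruct (piece_onto Hyx' Hz) as [u [Hu Hpu]].
    exists u; split; [exists y; auto | exact Hpu].
Qed.

(* p is injective on each star, since a star lies in one sheet over some
   V (c k); hence it maps each star homeomorphically onto its image. *)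
Lemma star_homeo x x' : p x' = p x -> homeo_onto p (star_set x') (image p (star_set x)).
Proof.
  intro Hx'; apply homeo_onto_of_open_map; auto.
  - apply star_open.
  - intros z Hz; apply star_image; eauto.
  - intros z z' Hz Hz' Hpz; destruct (B_cover x') as [k Hk].
    pose proof (closure_incl Hk) as Hcl.
    exact (ss_sheet_inj (sheets (c k)) (B_closure Hcl)
             (star_in_sheet Hcl Hz) (star_in_sheet Hcl Hz') Hpz).
  - intros w [u [[y [Hx [_ Hu]]] <-]]; rewrite <- Hx' in Hx.
    destruct (piece_onto Hx Hu) as [z [Hz Hpz]].
    exists z; split; [exists y; auto | exact Hpz].
Qed.

(* Stars of distinct points of a fibre are disjoint, so stars are slices. *)
Lemma star_slice x : slice p (star_set x).
Proof.
  split; [apply star_open |].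
  exists {x' | p x' = p x}, (fun s => star_set (proj1_sig s)),
         (exist (fun x' => p x' = p x) x eq_refl).
  split; [split; [| split; [| split]] | intro z; reflexivity].
  - intro s; apply star_open.
  - intros [x1 H1] [x2 H2] z Hz1 Hz2; simpl in *.
    apply ProofIrrelevanceTheory.subset_eq_compat.
    destruct (B_cover z) as [k Hk]; pose proof (closure_incl Hk) as Hcl.
    exact (ss_sheet_inj (sheets (c k)) (B_closure Hcl)
             (star_point_in_sheet Hcl Hz1) (star_point_in_sheet Hcl Hz2)
             (eq_trans H1 (eq_sym H2))).
  - intro z; rewrite star_image; split.
    + intros [x' [Hx' Hz]]; exists (exist _ x' Hx'); exact Hz.
    + intros [[x' Hx'] Hz]; exists x'; auto.
  - intros [x' Hx']; exact (star_homeo Hx').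
Qed.

Theorem overlay_of_adapted_nbhds : overlay p.
Proof.
  exists piece_family; split; [exact piece_covering_structure |].
  intro x; rewrite star_pieces; exact (star_slice x).
Qed.

End OverlayConstruction.

Theorem corollary4p11 (X Y : TopSpace) (p : X -> Y) :
  covering_map p -> finite_fibers p -> hausdorff X -> paracompact X ->
  overlay p.
Proof.
  intros Hcov Hfin Hh Hpc.
  pose proof Hcov as [Hc [Hsurj _]].
  destruct (covering_sheet_systems Hcov) as [V [E HVE]].
  assert (sheets : forall y, sheet_system p (V y) (E y)) by (intro y; apply HVE).
  assert (V_center : forall y, V y y) by (intro y; apply HVE).
  destruct (locally_finite_shrinking (O := fun x z => V (p x) (p z)) Hpc Hh)
    as [K [B [c [_ [Hcover [Hclosure Hlf]]]]]].
  { intro x; split; [apply Hc, (ss_base_open (sheets (p x))) | apply V_center]. }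
  destruct (functional_choice _
              (adapted_nbhd_exists sheets V_center (c := fun k => p (c k)) Hclosure Hlf))
    as [G HG].
  exact (overlay_of_adapted_nbhds Hc (covering_map_open Hcov) Hsurj Hfin
           sheets V_center Hclosure HG Hcover).
Qed.
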